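(* In the setting of fiber bundle complexes $B\otimes_\varphi F$ (with $B,F$ two-term complexes over $\mathbb{F}_2$), suppose that (1) every $\varphi(b^1,b^0)$ induces the identity on $H_0(F)$ and on $H_1(F)$; (2) $F$ has an augmentation $\epsilon:F_0\to\mathbb{F}_2$ (i.e. $\epsilon\partial^F=0$) whose induced map $H_0(F)\to\mathbb{F}_2$ is an isomorphism; (3) $H_0(B)=0$. Then the chain map $\pi_*:B\otimes_\varphi F\to B$ given by $b\otimes f\mapsto\epsilon(f)b$ on $B_1\otimes F_0$ and on $B_0\otimes F_0$, and by $0$ on $B_0\otimes F_1$ and $B_1\otimes F_1$, induces an isomorphism $H_1(B\otimes_\varphi F)\to H_1(B)$; and the map $\pi^*$ sending $\beta\in B^1=B_1^*$ to the functional on $(B\otimes_\varphi F)_1=(B_1\otimes F_0)\oplus(B_0\otimes F_1)$ given by $\beta\otimes\epsilon$ on $B_1\otimes F_0$ and $0$ on $B_0\otimes F_1$ induces an isomorphism $H^1(B)\to H^1(B\otimes_\varphi F)$.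
   Context: $\operatorname{Aut}(F)$ denotes the group of chain automorphisms of $F=(F_1\xrightarrow{\partial^F}F_0)$. $B=(B_1\xrightarrow{\partial^B}B_0)$ has distinguished bases; write $b^0\in\partial^Bb^1$ if basis vector $b^0$ appears with nonzero coefficient in $\partial^Bb^1$. A connection $\varphi$ assigns to each such pair an element $\varphi(b^1,b^0)\in\operatorname{Aut}(F)$; $\partial_\varphi(b^1\otimes f)=\sum_{b^0\in\partial^Bb^1}b^0\otimes\varphi(b^1,b^0)(f)$. $B\otimes_\varphi F$ is the total complex with degree-2,1,0 parts $B_1\otimes F_1$, $(B_1\otimes F_0)\oplus(B_0\otimes F_1)$, $B_0\otimes F_0$ and differential $\partial_\varphi+\operatorname{id}\otimes\partial^F$. Cohomology $H^i$ of a complex of finite-dimensional spaces is the homology of the dual complex with transposed differentials. *)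

From HB Require Import structures.
From mathcomp Require Import all_boot all_order all_algebra all_fingroup.
Set Implicit Arguments. Unset Strict Implicit. Unset Printing Implicit Defensive.
Import GRing.Theory.
Local Open Scope ring_scope.

(* All spaces are finite-dimensional with standard bases;
   vectors of a space of dimension n are row vectors 'rV_n, and the tensor
   product U (dim a) (x) V (dim b) is represented by 'M_(a,b)
   (entry (i,k) = coefficient of u_i (x) v_k). Linear maps act on the right. *)
Notation F2 := 'F_2.

(* f : V1 -> W1 induces a well-defined bijection
   ker dV1 / im dV2  -->  ker dW1 / im dW2. *)
Definition induces_homology_iso {V2 V1 V0 W2 W1 W0 : zmodType}
  (dV2 : V2 -> V1) (dV1 : V1 -> V0) (dW2 : W2 -> W1) (dW1 : W1 -> W0)
  (f : V1 -> W1) : Prop :=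
  [/\
      forall z, dV1 z = 0 -> dW1 (f z) = 0,
      forall w, exists w', f (dV2 w) = dW2 w',
      forall z, dW1 z = 0 -> exists z' w', dV1 z' = 0 /\ z = f z' + dW2 w' &
      forall z, dV1 z = 0 -> (exists w', f z = dW2 w') -> exists w, z = dV2 w].

Definition induces_identity {V2 V1 V0 : zmodType}
  (dV2 : V2 -> V1) (dV1 : V1 -> V0) (g : V1 -> V1) : Prop :=
  forall z, dV1 z = 0 -> exists w, g z - z = dV2 w.

Definition homology_vanishes {V2 V1 V0 : zmodType}
  (dV2 : V2 -> V1) (dV1 : V1 -> V0) : Prop :=
  forall z, dV1 z = 0 -> exists w, z = dV2 w.

(* Two-term complex F = (F_1 --DF--> F_0), dim F_1 = m1, dim F_0 = m0,
   f1 |-> f1 *m DF.  A chain automorphism is a pair (g1, g0) of invertible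
   matrices with g1 ; DF = DF ; g0. *)
Definition chain_aut {m1 m0 : nat} (DF : 'M[F2]_(m1, m0))
  (g : 'M[F2]_m1 * 'M[F2]_m0) : Prop :=
  [/\ g.1 \in unitmx, g.2 \in unitmx & g.1 *m DF = DF *m g.2].

(* B = (B_1 --DB--> B_0), b^1_i |-> sum_j DB i j b^0_j, so that
   b^0_j \in \partial^B b^1_i  iff  DB i j != 0.
   A connection is phi : 'I_n1 -> 'I_n0 -> Aut(F) (only the values at pairs
   with DB i j != 0 matter). *)

Section Bundle.
Variables (n1 n0 m1 m0 : nat) (DB : 'M[F2]_(n1, n0)) (DF : 'M[F2]_(m1, m0))
  (phi : 'I_n1 -> 'I_n0 -> 'M[F2]_m1 * 'M[F2]_m0) (eps : 'cV[F2]_m0).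

(* degree 2 : B_1 (x) F_1 = 'M_(n1,m1)
   degree 1 : (B_1 (x) F_0) + (B_0 (x) F_1) = 'M_(n1,m0) * 'M_(n0,m1)
   degree 0 : B_0 (x) F_0 = 'M_(n0,m0) *)

Definition dphi1 (Z : 'M[F2]_(n1, m1)) : 'M[F2]_(n0, m1) :=
  \matrix_(j < n0) \sum_(i < n1 | DB i j != 0) row i Z *m (phi i j).1.
Definition dphi0 (X : 'M[F2]_(n1, m0)) : 'M[F2]_(n0, m0) :=
  \matrix_(j < n0) \sum_(i < n1 | DB i j != 0) row i X *m (phi i j).2.

(* total differential partial_phi + id (x) partial^F (signs irrelevant in char 2) *)
Definition tot_d2 (Z : 'M[F2]_(n1, m1)) : 'M[F2]_(n1, m0) * 'M[F2]_(n0, m1) :=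
  (Z *m DF, dphi1 Z).
Definition tot_d1 (XY : 'M[F2]_(n1, m0) * 'M[F2]_(n0, m1)) : 'M[F2]_(n0, m0) :=
  dphi0 XY.1 + XY.2 *m DF.

Definition mxpair {a b : nat} (A B : 'M[F2]_(a, b)) : F2 :=
  \sum_(i < a) \sum_(k < b) A i k * B i k.
Definition pair1 (PQ XY : 'M[F2]_(n1, m0) * 'M[F2]_(n0, m1)) : F2 :=
  mxpair PQ.1 XY.1 + mxpair PQ.2 XY.2.

(* transposed differentials of the dual complex (cochains are represented in
   the dual bases, i.e. a functional is given by its values on basis vectors) *)
Definition tot_dt2 (PQ : 'M[F2]_(n1, m0) * 'M[F2]_(n0, m1)) : 'M[F2]_(n1, m1) :=
  \matrix_(i, k) pair1 PQ (tot_d2 (delta_mx i k)).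
Definition tot_dt1 (W : 'M[F2]_(n0, m0)) : 'M[F2]_(n1, m0) * 'M[F2]_(n0, m1) :=
  (\matrix_(i, k) mxpair W (tot_d1 (delta_mx i k, 0)),
   \matrix_(i, k) mxpair W (tot_d1 (0, delta_mx i k))).

Definition B_d1 (b : 'rV[F2]_n1) : 'rV[F2]_n0 := b *m DB.
Definition B_dt1 (w : 'rV[F2]_n0) : 'rV[F2]_n1 :=
  \row_i mxpair w (B_d1 (delta_mx 0 i)).

Definition pi_lower (XY : 'M[F2]_(n1, m0) * 'M[F2]_(n0, m1)) : 'rV[F2]_n1 :=
  (XY.1 *m eps)^T.
Definition pi_upper (beta : 'rV[F2]_n1) : 'M[F2]_(n1, m0) * 'M[F2]_(n0, m1) :=
  (\matrix_(i, k) (beta 0 i * eps k 0), 0).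

End Bundle.

(* zero maps from/to the zero space (used for the absent degrees) *)
Definition zero_in {a b : nat} : 'M[F2]_(0, 0) -> 'M[F2]_(a, b) := fun _ => 0.
Definition zero_out {a b : nat} : 'M[F2]_(a, b) -> 'M[F2]_(0, 0) := fun _ => 0.

From HB Require Import structures.
From mathcomp Require Import all_boot all_order all_algebra all_fingroup.
Import GRing.Theory.
Local Open Scope ring_scope.

(* Over F_2, with H_0(B) = 0 and eps : H_0(F) ~= F_2, the
   projection of the bundle B (x)_phi F onto its base is an isomorphism in
   (co)homology of degree 1.  The hypotheses are first recast as matrix
   facts: each phi(b^1,b^0) is a chain map fixing the 1-cycles of F and
   preserving eps; eps is split by some e0 and ker eps = im DF; and DB has a
   section C.  These give the two key identities
     partial_phi = DB (x) id   on B_1 (x) ker DF,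
     eps o partial_phi = DB o eps   on B_1 (x) F_0,
   i.e. the twisting is invisible both on cycles of F and through eps. *)

Lemma F2_addmm (a b : nat) (M : 'M[F2]_(a, b)) : M + M = 0.
Proof.
apply/matrixP => i k; rewrite !mxE.
by apply/eqP; rewrite -mulr2n -mulr_natr pchar_Fp_0 ?mulr0.
Qed.

Lemma sum_over_nonzero (n k : nat) (c : 'I_n -> F2) (v : 'I_n -> 'rV[F2]_k) :
  \sum_(i | c i != 0) v i = \sum_i c i *: v i.
Proof.
rewrite big_mkcond; apply: eq_bigr => i _.
case: ifP => [|/negbFE/eqP ->]; last by rewrite scale0r.
case: (c i) => [[|[|n']] Hn] //= _.
by rewrite (_ : Ordinal Hn = 1) ?scale1r //; apply/val_inj.
Qed.

Lemma mxpairE (a b : nat) (A B : 'M[F2]_(a, b)) : mxpair A B = \tr (A *m B^T).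
Proof.
rewrite /mxpair /mxtrace; apply: eq_bigr => i _; rewrite mxE.
by apply: eq_bigr => k _; rewrite mxE.
Qed.

Lemma mxpair_delta (a b : nat) (A : 'M[F2]_(a, b)) i k :
  mxpair A (delta_mx i k) = A i k.
Proof.
rewrite /mxpair (bigD1 i) //= (bigD1 k) //= !mxE !eqxx mulr1 big1 ?addr0.
  rewrite big1 ?addr0 // => i' ni; apply: big1 => k' _.
  by rewrite mxE (negbTE ni) mulr0.
by move=> k' nk; rewrite mxE eqxx (negbTE nk) mulr0.
Qed.

Lemma mxpair_eq (a b : nat) (A A' : 'M[F2]_(a, b)) :
  (forall B, mxpair A B = mxpair A' B) -> A = A'.
Proof. by move=> H; apply/matrixP => i k; rewrite -!mxpair_delta H. Qed.

Lemma mxpairDr (a b : nat) (A B C : 'M[F2]_(a, b)) :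
  mxpair A (B + C) = mxpair A B + mxpair A C.
Proof. by rewrite !mxpairE linearD /= mulmxDr mxtraceD. Qed.

Lemma mxpairZr (a b : nat) (A B : 'M[F2]_(a, b)) c :
  mxpair A (c *: B) = c * mxpair A B.
Proof. by rewrite !mxpairE linearZ /= -scalemxAr mxtraceZ. Qed.

Lemma mxpairDl (a b : nat) (A B C : 'M[F2]_(a, b)) :
  mxpair (A + B) C = mxpair A C + mxpair B C.
Proof. by rewrite !mxpairE mulmxDl mxtraceD. Qed.

Lemma mxpairNl (a b : nat) (A B : 'M[F2]_(a, b)) : mxpair (- A) B = - mxpair A B.
Proof. by rewrite !mxpairE mulNmx linearN. Qed.

Lemma mxpair0l (a b : nat) (B : 'M[F2]_(a, b)) : mxpair 0 B = 0.
Proof. by rewrite mxpairE mul0mx mxtrace0. Qed.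

Lemma mxpair0r (a b : nat) (A : 'M[F2]_(a, b)) : mxpair A 0 = 0.
Proof. by rewrite mxpairE trmx0 mulmx0 mxtrace0. Qed.

Lemma mxpair_adj (p q r : nat) (A : 'M[F2]_(p, q)) (M : 'M[F2]_(r, q))
  (B : 'M[F2]_(p, r)) :
  mxpair (A *m M^T) B = mxpair A (B *m M).
Proof. by rewrite !mxpairE trmx_mul mulmxA. Qed.

Lemma mxpair_rank1 (n m : nat) (u : 'rV[F2]_n) (v : 'cV[F2]_m)
  (M : 'M[F2]_(n, m)) :
  mxpair (u^T *m v^T) M = mxpair u ((M *m v)^T).
Proof.
rewrite !mxpairE trmxK -mulmxA mxtrace_mulC -mxtrace_tr !trmx_mul !trmxK.
by rewrite mulmxA.
Qed.

(* A functional on matrices that is additive and homogeneous is determined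
   by its values on the matrix units; used to compute transposed
   differentials, which are defined entrywise. *)
Lemma functional_eq_on_units (R : pzRingType) (a b : nat)
  (f g : 'M[R]_(a, b) -> R) :
  (forall x y, f (x + y) = f x + f y) -> (forall c x, f (c *: x) = c * f x) ->
  (forall x y, g (x + y) = g x + g y) -> (forall c x, g (c *: x) = c * g x) ->
  (forall i k, f (delta_mx i k) = g (delta_mx i k)) -> forall Z, f Z = g Z.
Proof.
move=> fD fZ gD gZ fg Z; rewrite (matrix_sum_delta Z).
have f0 : f 0 = 0 by rewrite -(scale0r 0) fZ mul0r.
have g0 : g 0 = 0 by rewrite -(scale0r 0) gZ mul0r.
have big_hom (I : finType) (F : I -> 'M[R]_(a, b)) :
    (forall i, f (F i) = g (F i)) -> f (\sum_i F i) = g (\sum_i F i).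
  move=> eqF; apply: (big_ind (fun x => f x = g x)) => //; first by rewrite f0 g0.
  by move=> x y ex ey; rewrite fD gD ex ey.
by apply: (big_hom) => i; apply: (big_hom) => k; rewrite fZ gZ fg.
Qed.

Lemma rowwise_factor (K : fieldType) (a b c : nat)
  (A : 'M[K]_(a, c)) (D : 'M[K]_(b, c)) :
  (forall j, exists w, row j A = w *m D) -> exists Y, A = Y *m D.
Proof.
move=> H; have: (A <= D)%MS.
  by apply/row_subP => j; case: (H j) => w ->; apply: submxMl.
by case/submxP => Y ->; exists Y.
Qed.

Lemma annihilator_of_kernel {K : fieldType} {m1 m0 p : nat}
  {D : 'M[K]_(m1, m0)} {Q : 'M[K]_(p, m1)} :
  Q *m (kermx D)^T = 0 -> exists W, Q = W *m D^T.
Proof.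
move=> HQ; set U := kermx D.
have DT_sub : (D^T <= kermx U^T)%MS.
  by rewrite sub_kermx -trmx_mul mulmx_ker trmx0.
have Q_sub : (Q <= kermx U^T)%MS by rewrite sub_kermx HQ.
have rk : \rank (kermx U^T) = \rank D^T.
  by rewrite mxrank_ker mxrank_tr mxrank_ker mxrank_tr subKn // rank_leq_row.
have := (mxrank_leqif_sup DT_sub).2; rewrite rk eqxx => /esym sub_DT.
by apply/submxP; apply: submx_trans Q_sub sub_DT.
Qed.

Lemma cocycle_multiple_of_aug {K : fieldType} {m1 m0 p : nat}
  {D : 'M[K]_(m1, m0)} {eps : 'cV[K]_m0} {e0 : 'rV[K]_m0} :
  e0 *m eps = 1 -> (forall f0 : 'rV_m0, f0 *m eps = 0 -> exists w, f0 = w *m D) ->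
  forall {P : 'M[K]_(p, m0)}, P *m D^T = 0 -> P = (P *m e0^T) *m eps^T.
Proof.
move=> e0_eps ker_eps P HP; set M := 1%:M - eps *m e0.
have M_eps : M *m eps = 0 by rewrite mulmxBl mul1mx -mulmxA e0_eps mulmx1 subrr.
have [W EM] : exists W, M = W *m D.
  by apply: rowwise_factor => k; apply: ker_eps; rewrite -row_mul M_eps row0.
have : P *m M^T = 0 by rewrite EM trmx_mul mulmxA HP mul0mx.
rewrite /M linearB /= trmx1 mulmxBr mulmx1 trmx_mul mulmxA.
by move/eqP; rewrite subr_eq0 => /eqP.
Qed.

Section FiberBundle.
Context {n1 n0 m1 m0 : nat} {DB : 'M[F2]_(n1, n0)} {DF : 'M[F2]_(m1, m0)}
  {phi : 'I_n1 -> 'I_n0 -> 'M[F2]_m1 * 'M[F2]_m0} {eps : 'cV[F2]_m0}.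

Local Notation dphi1 := (dphi1 DB phi).
Local Notation dphi0 := (dphi0 DB phi).
Local Notation d2 := (tot_d2 DB DF phi).
Local Notation d1 := (tot_d1 DB DF phi).
Local Notation dt2 := (tot_dt2 DB DF phi).
Local Notation dt1 := (tot_dt1 DB DF phi).

Hypothesis phi_chain :
  forall i j, DB i j != 0 -> (phi i j).1 *m DF = DF *m (phi i j).2.
(* Hypothesis (1) on H_1(F): each phi(b^1, b^0) fixes the 1-cycles of F. *)
Hypothesis phi_fixes_cycles :
  forall i j, DB i j != 0 -> forall z : 'rV_m1, z *m DF = 0 -> z *m (phi i j).1 = z.
(* Hypothesis (1) on H_0(F), seen through eps: each phi(b^1, b^0) preserves eps. *)
Hypothesis phi_preserves_aug :
  forall i j, DB i j != 0 -> (phi i j).2 *m eps = eps.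
(* Hypothesis (2): eps is an augmentation, split by e0, with kernel im DF. *)
Hypothesis eps_aug : DF *m eps = 0.
Context {e0 : 'rV[F2]_m0}.
Hypothesis e0_eps : e0 *m eps = 1.
Hypothesis ker_eps :
  forall f0 : 'rV_m0, f0 *m eps = 0 -> exists w, f0 = w *m DF.
(* Hypothesis (3): H_0(B) = 0, i.e. the boundary B_1 -> B_0 has a section C. *)
Context {C : 'M[F2]_(n0, n1)}.
Hypothesis DB_split : 1%:M = C *m DB.

Lemma dphi1D A B : dphi1 (A + B) = dphi1 A + dphi1 B.
Proof.
apply/row_matrixP => j; rewrite linearD /= !rowK -big_split /=.
by apply: eq_bigr => i _; rewrite linearD /= mulmxDl.
Qed.

Lemma dphi1Z c A : dphi1 (c *: A) = c *: dphi1 A.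
Proof.
apply/row_matrixP => j; rewrite linearZ /= !rowK scaler_sumr.
by apply: eq_bigr => i _; rewrite linearZ /= scalemxAl.
Qed.

Lemma dphi0D A B : dphi0 (A + B) = dphi0 A + dphi0 B.
Proof.
apply/row_matrixP => j; rewrite linearD /= !rowK -big_split /=.
by apply: eq_bigr => i _; rewrite linearD /= mulmxDl.
Qed.

Lemma dphi0Z c A : dphi0 (c *: A) = c *: dphi0 A.
Proof.
apply/row_matrixP => j; rewrite linearZ /= !rowK scaler_sumr.
by apply: eq_bigr => i _; rewrite linearZ /= scalemxAl.
Qed.

Lemma dphi0_0 : dphi0 0 = 0.
Proof. by rewrite -(scale0r 0) dphi0Z scale0r. Qed.

(* B (x)_phi F is a complex: d1 o d2 = 0 (this uses characteristic 2). *)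
Lemma d1_d2 Z : d1 (d2 Z) = 0.
Proof.
apply/row_matrixP => j; rewrite /tot_d1 /tot_d2 /= linearD /= row_mul !rowK.
rewrite mulmx_suml -big_split /= row0; apply: big1 => i Hij.
by rewrite row_mul -!mulmxA phi_chain // F2_addmm.
Qed.

Lemma dphi1_on_cycles Z : Z *m DF = 0 -> dphi1 Z = DB^T *m Z.
Proof.
move=> HZ; apply/row_matrixP => j; rewrite rowK row_mul mulmx_sum_row.
rewrite (eq_bigr (fun i => row i Z)); last first.
  by move=> i Hij; rewrite phi_fixes_cycles // -row_mul HZ row0.
by rewrite sum_over_nonzero; apply: eq_bigr => i _; rewrite !mxE.
Qed.

Lemma dphi0_eps X : dphi0 X *m eps = DB^T *m (X *m eps).
Proof.
apply/row_matrixP => j; rewrite !row_mul rowK mulmx_suml mulmx_sum_row.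
rewrite (eq_bigr (fun i => row i X *m eps)); last first.
  by move=> i Hij; rewrite -mulmxA phi_preserves_aug.
by rewrite sum_over_nonzero; apply: eq_bigr => i _; rewrite !mxE row_mul.
Qed.

Lemma dphi1_lift Y : Y *m DF = 0 -> dphi1 (C^T *m Y) = Y.
Proof.
move=> HY; rewrite dphi1_on_cycles; last by rewrite -mulmxA HY mulmx0.
by rewrite mulmxA -trmx_mul -DB_split trmx1 mul1mx.
Qed.

Lemma ker_eps_mx {p : nat} (X : 'M[F2]_(p, m0)) :
  X *m eps = 0 -> exists Z, X = Z *m DF.
Proof.
by move=> HX; apply: rowwise_factor => i; apply: ker_eps; rewrite -row_mul HX row0.
Qed.

Local Notation pi_lower := (@pi_lower n1 n0 m1 m0 eps).

(* pi_* sends cycles to cycles, because eps o partial_phi = DB o eps. *)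
Lemma pi_lower_cycle XY : d1 XY = 0 -> B_d1 DB (pi_lower XY) = 0.
Proof.
case: XY => X Y /= Hz; have := congr1 (mulmx^~ eps) Hz.
rewrite /tot_d1 /= mul0mx mulmxDl -mulmxA eps_aug mulmx0 addr0 dphi0_eps => E.
by rewrite /B_d1 /pi_lower /= -[DB]trmxK -trmx_mul E trmx0.
Qed.

Lemma pi_lower_boundary Z : pi_lower (d2 Z) = 0.
Proof. by rewrite /pi_lower /tot_d2 /= -mulmxA eps_aug mulmx0 trmx0. Qed.

(* Surjectivity: a cycle z of B lifts to (z (x) e0, Y0) where the correction
   Y0 exists because partial_phi (z (x) e0) lies in ker eps = im DF. *)
Lemma pi_lower_surj z :
  B_d1 DB z = 0 -> exists XY, d1 XY = 0 /\ z = pi_lower XY.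
Proof.
move=> Hz; set X := z^T *m e0.
have XE : X *m eps = z^T by rewrite /X -mulmxA e0_eps mulmx1.
have [Y0 EY] : exists Y0, dphi0 X = Y0 *m DF.
  by apply: ker_eps_mx; rewrite dphi0_eps XE -trmx_mul [z *m DB]Hz trmx0.
exists (X, Y0); split; first by rewrite /tot_d1 /= EY F2_addmm.
by rewrite /pi_lower /= XE trmxK.
Qed.

(* Injectivity: if eps kills X then X = Z0 DF, and the remaining B_0 (x) F_1
   part is a cycle, which is a boundary by dphi1_lift. *)
Lemma pi_lower_inj XY : d1 XY = 0 -> pi_lower XY = 0 -> exists Z, XY = d2 Z.
Proof.
case: XY => X Y Hz Hpi.
have XE : X *m eps = 0 by apply: trmx_inj; rewrite trmx0 -Hpi.
have [Z0 EX] := ker_eps_mx X XE.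
set Y' := Y - dphi1 Z0.
have HY' : Y' *m DF = 0.
  have := d1_d2 Z0; rewrite /tot_d1 /tot_d2 /= -EX => E.
  rewrite /tot_d1 /= in Hz.
  by rewrite /Y' mulmxBl -(addr0_eq Hz) -(addr0_eq E) subrr.
exists (Z0 + C^T *m Y'); rewrite /tot_d2; congr pair.
  by rewrite mulmxDl -mulmxA HY' mulmx0 addr0 EX.
by rewrite dphi1D dphi1_lift // /Y' addrC subrK.
Qed.

Lemma pi_lower_homology_iso :
  induces_homology_iso d2 d1 (@zero_in 1 n1) (B_d1 DB) pi_lower.
Proof.
split.
- exact: pi_lower_cycle.
- by move=> Z; exists 0; rewrite pi_lower_boundary.
- move=> z /pi_lower_surj [XY [HXY ->]].
  by exists XY, 0; rewrite /zero_in addr0.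
- by move=> XY HXY [w]; rewrite /zero_in; apply: pi_lower_inj.
Qed.

Lemma tot_dt2_pairing PQ Z : mxpair (dt2 PQ) Z = pair1 PQ (d2 Z).
Proof.
apply: (@functional_eq_on_units _ _ _ _ (fun Z => pair1 PQ (d2 Z))).
- by move=> *; rewrite mxpairDr.
- by move=> *; rewrite mxpairZr.
- by move=> x y; rewrite /pair1 /tot_d2 /= mulmxDl dphi1D !mxpairDr addrACA.
- by move=> c x; rewrite /pair1 /tot_d2 /= -scalemxAl dphi1Z !mxpairZr mulrDr.
- by move=> i k; rewrite mxpair_delta /tot_dt2 mxE.
Qed.

Lemma tot_dt1_pairing W X : mxpair (dt1 W).1 X = mxpair W (dphi0 X).
Proof.
apply: (@functional_eq_on_units _ _ _ _ (fun X => mxpair W (dphi0 X))).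
- by move=> *; rewrite mxpairDr.
- by move=> *; rewrite mxpairZr.
- by move=> x y; rewrite dphi0D mxpairDr.
- by move=> c x; rewrite dphi0Z mxpairZr.
- by move=> i k; rewrite mxpair_delta /tot_dt1 mxE /tot_d1 /= mul0mx addr0.
Qed.

Lemma tot_dt1_snd W : (dt1 W).2 = W *m DF^T.
Proof.
apply/matrixP => j k; rewrite mxE /tot_d1 /= dphi0_0 add0r.
by rewrite -mxpair_delta mxpair_adj.
Qed.

Lemma B_dt1E w : B_dt1 DB w = w *m DB^T.
Proof. by apply/rowP => i; rewrite mxE /B_d1 -mxpair_adj mxpair_delta. Qed.

Local Notation pi_upper := (@pi_upper n1 n0 m1 m0 eps).

Lemma pi_upperE beta : pi_upper beta = (beta^T *m eps^T, 0).
Proof. by congr pair; apply/matrixP => i k; rewrite !mxE big_ord1 !mxE. Qed.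

(* Dual of dphi0_eps: the coboundary of u (x) eps is (u DB^T) (x) eps. *)
Lemma tot_dt1_aug u : (dt1 (u^T *m eps^T)).1 = (u *m DB^T)^T *m eps^T.
Proof.
apply: mxpair_eq => X; rewrite tot_dt1_pairing !mxpair_rank1 dphi0_eps.
by rewrite mxpair_adj trmx_mul trmxK.
Qed.

Lemma cocycle_pairing {P Q} :
  dt2 (P, Q) = 0 -> forall Z, mxpair P (Z *m DF) + mxpair Q (dphi1 Z) = 0.
Proof.
by move=> HPQ Z; rewrite -[LHS]/(pair1 (P, Q) (d2 Z)) -tot_dt2_pairing HPQ mxpair0l.
Qed.

Lemma pi_upper_cocycle beta : dt2 (pi_upper beta) = 0.
Proof.
apply: mxpair_eq => Z; rewrite tot_dt2_pairing pi_upperE mxpair0l /pair1 /=.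
by rewrite mxpair0l addr0 mxpair_rank1 -mulmxA eps_aug mulmx0 trmx0 mxpair0r.
Qed.

Lemma pi_upper_coboundary w : pi_upper (B_dt1 DB w) = dt1 (w^T *m eps^T).
Proof.
rewrite pi_upperE B_dt1E [dt1 _]surjective_pairing tot_dt1_snd tot_dt1_aug.
by congr pair; rewrite -mulmxA -trmx_mul eps_aug trmx0 mulmx0.
Qed.

(* Surjectivity: the B_0 (x) F_1 part Q of a cocycle kills the cycles of F_1
   (lifted by dphi1_lift), so Q = W0 DF^T; subtracting the coboundary of W0
   leaves a cochain on B_1 (x) F_0 vanishing on im DF, a multiple of eps. *)
Lemma pi_upper_surj P Q :
  dt2 (P, Q) = 0 -> exists u W, (P, Q) = pi_upper u + dt1 W.
Proof.
move=> HPQ.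
have Q_ker : Q *m (kermx DF)^T = 0.
  apply: mxpair_eq => K; rewrite mxpair_adj mxpair0l.
  have YDF : K *m kermx DF *m DF = 0 by rewrite -mulmxA mulmx_ker mulmx0.
  have := cocycle_pairing HPQ (C^T *m (K *m kermx DF)).
  by rewrite dphi1_lift // -mulmxA YDF mulmx0 mxpair0r add0r.
have [W0 EQ] := annihilator_of_kernel Q_ker.
set P' := P - (dt1 W0).1.
have P'DF : P' *m DF^T = 0.
  apply: mxpair_eq => Z; rewrite mxpair0l mxpair_adj mxpairDl mxpairNl.
  have cocycle_Z := cocycle_pairing HPQ Z; rewrite EQ mxpair_adj in cocycle_Z.
  have d1d2_Z : mxpair W0 (dphi0 (Z *m DF)) + mxpair W0 (dphi1 Z *m DF) = 0.
    have := d1_d2 Z; rewrite /tot_d1 /tot_d2 /= => d1d2.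
    by rewrite -mxpairDr d1d2 mxpair0r.
  rewrite tot_dt1_pairing; apply/eqP; rewrite subr_eq0; apply/eqP.
  by apply: oppr_inj; rewrite (addr0_eq cocycle_Z) (addr0_eq d1d2_Z).
exists (P' *m e0^T)^T, W0.
rewrite pi_upperE trmxK -(cocycle_multiple_of_aug e0_eps ker_eps P'DF).
rewrite [dt1 W0]surjective_pairing tot_dt1_snd -EQ.
by congr pair; rewrite /= ?subrK ?add0r.
Qed.

(* Injectivity: if beta (x) eps = dt1 W, then W vanishes on im DF, hence
   W = u (x) eps, and comparing with tot_dt1_aug gives beta = u DB^T. *)
Lemma pi_upper_inj beta W : pi_upper beta = dt1 W -> exists u, beta = B_dt1 DB u.
Proof.
move=> EW; set u := (W *m e0^T)^T.
have Wu : W = u^T *m eps^T.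
  rewrite trmxK; apply: cocycle_multiple_of_aug e0_eps ker_eps _ _.
  by have := congr1 snd EW; rewrite pi_upperE tot_dt1_snd /= => <-.
have E1 := congr1 fst EW; rewrite pi_upperE Wu tot_dt1_aug /= in E1.
have eps_e0 : eps^T *m e0^T = 1%:M by rewrite -trmx_mul e0_eps trmx1.
exists u; rewrite B_dt1E; apply: trmx_inj.
by rewrite -[beta^T]mulmx1 -[(u *m _)^T]mulmx1 -eps_e0 !mulmxA E1.
Qed.

Lemma pi_upper_cohomology_iso :
  induces_homology_iso (B_dt1 DB) (@zero_out 1 n1) dt1 dt2 pi_upper.
Proof.
split.
- by move=> beta _; apply: pi_upper_cocycle.
- by move=> w; exists (w^T *m eps^T); apply: pi_upper_coboundary.
- move=> [P Q] /pi_upper_surj [u [W EPQ]].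
  by exists u, W.
- by move=> beta _ [W EW]; apply: pi_upper_inj EW.
Qed.

End FiberBundle.

Lemma identity_on_H1 {m1 m0 : nat} {DF : 'M[F2]_(m1, m0)} {g : 'M[F2]_m1} :
  induces_identity (@zero_in 1 m1) (fun f1 : 'rV[F2]_m1 => f1 *m DF)
                   (fun f1 => f1 *m g) ->
  forall z : 'rV_m1, z *m DF = 0 -> z *m g = z.
Proof.
by move=> Hg z /Hg [w]; rewrite /zero_in => /eqP; rewrite subr_eq0 => /eqP.
Qed.

Lemma identity_on_H0 {m1 m0 : nat} {DF : 'M[F2]_(m1, m0)} {g : 'M[F2]_m0}
  {eps : 'cV[F2]_m0} :
  DF *m eps = 0 ->
  induces_identity (fun f1 : 'rV[F2]_m1 => f1 *m DF) (@zero_out 1 m0)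
                   (fun f0 => f0 *m g) ->
  g *m eps = eps.
Proof.
move=> eps_aug Hg; apply/row_matrixP => k; rewrite row_mul !rowE.
have [w Hw] := Hg (delta_mx 0 k) erefl.
by apply/eqP; rewrite -subr_eq0 -mulmxBl Hw -mulmxA eps_aug mulmx0.
Qed.

Lemma augmentation_iso {m1 m0 : nat} {DF : 'M[F2]_(m1, m0)} {eps : 'cV[F2]_m0} :
  induces_homology_iso (fun f1 : 'rV[F2]_m1 => f1 *m DF) (@zero_out 1 m0)
                       (@zero_in 1 1) (@zero_out 1 1) (fun f0 => f0 *m eps) ->
  (exists e0 : 'rV_m0, e0 *m eps = 1) /\
  (forall f0 : 'rV_m0, f0 *m eps = 0 -> exists w, f0 = w *m DF).
Proof.
case=> _ _ eps_onto eps_inj; split.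
  have [e0 [w [_ ->]]] := eps_onto 1 erefl.
  by exists e0; rewrite /zero_in addr0.
by move=> f0 Hf0; apply: eps_inj => //; exists 0.
Qed.

Lemma H0_vanishes_section {n1 n0 : nat} {DB : 'M[F2]_(n1, n0)} :
  homology_vanishes (B_d1 DB) (@zero_out 1 n0) -> exists C, 1%:M = C *m DB.
Proof. by move=> HB; apply: rowwise_factor => j; apply: HB. Qed.

Theorem mainTheorem3 (n1 n0 m1 m0 : nat)
  (DB : 'M[F2]_(n1, n0)) (DF : 'M[F2]_(m1, m0))
  (phi : 'I_n1 -> 'I_n0 -> 'M[F2]_m1 * 'M[F2]_m0) (eps : 'cV[F2]_m0) :
  (* phi is a connection: values in Aut(F) *)
  (forall i j, DB i j != 0 -> chain_aut DF (phi i j)) ->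
  (* (1) each phi(b^1,b^0) induces the identity on H_0(F) and H_1(F) *)
  (forall i j, DB i j != 0 ->
     induces_identity (fun f1 : 'rV[F2]_m1 => f1 *m DF)
                      (@zero_out 1 m0) (fun f0 => f0 *m (phi i j).2) /\
     induces_identity (@zero_in 1 m1)
                      (fun f1 : 'rV[F2]_m1 => f1 *m DF) (fun f1 => f1 *m (phi i j).1)) ->
  (* (2) eps is an augmentation inducing an iso H_0(F) -> F_2 *)
  DF *m eps = 0 ->
  induces_homology_iso (fun f1 : 'rV[F2]_m1 => f1 *m DF) (@zero_out 1 m0)
                       (@zero_in 1 1) (@zero_out 1 1)
                       (fun f0 : 'rV[F2]_m0 => f0 *m eps) ->
  (* (3) H_0(B) = 0 *)
  homology_vanishes (B_d1 DB) (@zero_out 1 n0) ->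
  (* pi_* : H_1(B (x) F) -> H_1(B) is an isomorphism *)
  induces_homology_iso (tot_d2 DB DF phi) (tot_d1 DB DF phi)
                       (@zero_in 1 n1) (B_d1 DB) (@pi_lower n1 n0 m1 m0 eps)
  /\
  (* pi^* : H^1(B) -> H^1(B (x) F) is an isomorphism *)
  induces_homology_iso (B_dt1 DB) (@zero_out 1 n1)
                       (tot_dt1 DB DF phi) (tot_dt2 DB DF phi) (@pi_upper n1 n0 m1 m0 eps).
Proof.
move=> phi_aut phi_id eps_aug /augmentation_iso [[e0 e0_eps] ker_eps] HB0.
have phi_chain i j (Hij : DB i j != 0) : (phi i j).1 *m DF = DF *m (phi i j).2.
  by case: (phi_aut i j Hij).
have phi_fixes_cycles i j (Hij : DB i j != 0) :=
  identity_on_H1 (phi_id i j Hij).2.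
have phi_preserves_aug i j (Hij : DB i j != 0) :=
  identity_on_H0 eps_aug (phi_id i j Hij).1.
have [C DB_split] := H0_vanishes_section HB0.
split.
- exact: (pi_lower_homology_iso phi_chain phi_fixes_cycles phi_preserves_aug
    eps_aug e0_eps ker_eps DB_split).
- exact: (pi_upper_cohomology_iso phi_chain phi_fixes_cycles phi_preserves_aug
    eps_aug e0_eps ker_eps DB_split).
Qed.
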